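(* Let $M,N$ be positive integers. For $m,n,i,j\in\{1,\dots,N\}$ and $k,\ell\in\{1,\dots,M\}$ define $$A_{k\ell ij}^{mn}=\int_0^1\sin(m\pi x)\sin(k\pi x)\cos(i\pi x)\,dx\int_0^1\sin(n\pi y)\cos(\ell \pi y)\sin(j\pi y)\,dy,$$ $$B_{k\ell ij}^{mn}=\int_0^1\sin(m\pi x)\cos(k\pi x)\sin(i\pi x)\,dx\int_0^1\sin(n\pi y)\sin(\ell \pi y)\cos(j\pi y)\,dy,$$ and $$\hat K_{ij}^{mn}=\max\Big\{i\Big(\sum_{k,\ell=1}^M(k^2+\ell^2)^{-1}(A_{k\ell ij}^{mn})^2\Big)^{1/2},\ j\Big(\sum_{k,\ell=1}^M(k^2+\ell^2)^{-1}(B_{k\ell ij}^{mn})^2\Big)^{1/2}\Big\}.$$ Let $\alpha_{k\ell},\beta_{k\ell}$ ($k,\ell=1,\dots,M$) be real numbers satisfying $\frac{\pi^2}{4}\sum_{k,\ell=1}^M(k^2+\ell^2)(\alpha_{k\ell}^2+\beta_{k\ell}^2)=1$, and set $$F_{ij}^{mn}=\sum_{k,\ell=1}^M iA_{k\ell ij}^{mn}\alpha_{k\ell},\qquad G_{ij}^{mn}=\sum_{k,\ell=1}^M jB_{k\ell ij}^{mn}\beta_{k\ell}.$$ Then for all $m,n,i,j\in\{1,\dots,N\}$, $$-2\sqrt{2}\hat K_{ij}^{mn}\le F_{ij}^{mn}+G_{ij}^{mn}\le 2\sqrt{2}\hat K_{ij}^{mn}.$$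
   Context: The quantities arise from a spectral Galerkin discretization of the advection-diffusion equation on $[0,1]^2$ with $\phi=\sum_{i,j}a_{ij}(t)\sin(i\pi x)\sin(j\pi y)$ and velocity $v_1=\sum_{k,\ell}\alpha_{k\ell}\sin(k\pi x)\cos(\ell\pi y)$, $v_2=\sum_{k,\ell}\beta_{k\ell}\cos(k\pi x)\sin(\ell\pi y)$; the normalization $\frac{\pi^2}{4}\sum(k^2+\ell^2)(\alpha_{k\ell}^2+\beta_{k\ell}^2)=1$ is the condition $\|\nabla\mathbf v\|_{L^2}^2=1$. *)

From Stdlib Require Import Reals.
From Coquelicot Require Import Coquelicot.
Open Scope R_scope.

Definition sumR (a b : nat) (f : nat -> R) : R := sum_n_m f a b.

Definition A_coef (k l i j m n : nat) : R :=
  RInt (fun x => sin (INR m * PI * x) * sin (INR k * PI * x) * cos (INR i * PI * x)) 0 1 *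
  RInt (fun y => sin (INR n * PI * y) * cos (INR l * PI * y) * sin (INR j * PI * y)) 0 1.

Definition B_coef (k l i j m n : nat) : R :=
  RInt (fun x => sin (INR m * PI * x) * cos (INR k * PI * x) * sin (INR i * PI * x)) 0 1 *
  RInt (fun y => sin (INR n * PI * y) * sin (INR l * PI * y) * cos (INR j * PI * y)) 0 1.

Definition Khat (M i j m n : nat) : R :=
  Rmax
    (INR i * sqrt (sumR 1 M (fun k => sumR 1 M (fun l =>
        / (INR k ^ 2 + INR l ^ 2) * (A_coef k l i j m n) ^ 2))))
    (INR j * sqrt (sumR 1 M (fun k => sumR 1 M (fun l =>
        / (INR k ^ 2 + INR l ^ 2) * (B_coef k l i j m n) ^ 2)))).

Definition F_coef (M : nat) (alpha : nat -> nat -> R) (i j m n : nat) : R :=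
  sumR 1 M (fun k => sumR 1 M (fun l => INR i * A_coef k l i j m n * alpha k l)).

Definition G_coef (M : nat) (beta : nat -> nat -> R) (i j m n : nat) : R :=
  sumR 1 M (fun k => sumR 1 M (fun l => INR j * B_coef k l i j m n * beta k l)).

(* Only the weights k^2 + l^2 > 0 matter, not the values of the integrals.  Weighted AM-GM,
   2|xy| <= t x^2/w + w y^2/t, summed over (k, l) gives for every t > 0
   2|F| <= t i^2 SA + Sa/t <= t Khat^2 + Sa/t, where SA is the sum under the root in Khat
   and Sa = sum (k^2 + l^2) alpha^2; likewise for G with beta.  Adding, and using
   Sa + Sb = 4/pi^2, |F + G| <= t Khat^2 + (2/pi^2)/t for all t > 0; minimizing over t gives
   |F + G| <= 2 sqrt 2 Khat / pi. *)
From Stdlib Require Import Reals Lra Lia Psatz.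
From Coquelicot Require Import Coquelicot.
Open Scope R_scope.

Lemma sumR_le_loc a b (f g : nat -> R) :
  (forall k, (a <= k <= b)%nat -> f k <= g k) -> sumR a b f <= sumR a b g.
Proof.
  intros Hfg. unfold sumR.
  pose (h k := if andb (Nat.leb a k) (Nat.leb k b) then g k else f k).
  rewrite (sum_n_m_ext_loc g h).
  - apply sum_n_m_le. intros k. unfold h.
    destruct (Nat.leb a k) eqn:E1; destruct (Nat.leb k b) eqn:E2; simpl; try lra.
    apply Hfg. apply Nat.leb_le in E1, E2. lia.
  - intros k [H1 H2]. unfold h.
    apply Nat.leb_le in H1, H2. rewrite H1, H2. reflexivity.
Qed.

Lemma sumR_plus a b (f g : nat -> R) :
  sumR a b (fun k => f k + g k) = sumR a b f + sumR a b g.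
Proof. exact (sum_n_m_plus (G:=R_AbelianMonoid) f g a b). Qed.

Lemma sumR_scal_l a b c (f : nat -> R) :
  sumR a b (fun k => c * f k) = c * sumR a b f.
Proof. exact (sum_n_m_mult_l (K:=R_Ring) c f a b). Qed.

Lemma sumR_abs_le a b (f : nat -> R) :
  Rabs (sumR a b f) <= sumR a b (fun k => Rabs (f k)).
Proof. exact (norm_sum_n_m (V:=R_NormedModule) f a b). Qed.

Lemma sumR_nonneg a b (f : nat -> R) :
  (forall k, (a <= k <= b)%nat -> 0 <= f k) -> 0 <= sumR a b f.
Proof.
  intros Hf. apply Rle_trans with (sumR a b (fun _ => 0)).
  - unfold sumR. rewrite (sum_n_m_const a b 0). lra.
  - exact (sumR_le_loc a b _ _ Hf).
Qed.

Lemma sumR2_plus a b (f g : nat -> nat -> R) :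
  sumR a b (fun k => sumR a b (fun l => f k l + g k l)) =
  sumR a b (fun k => sumR a b (fun l => f k l)) + sumR a b (fun k => sumR a b (fun l => g k l)).
Proof.
  rewrite <- sumR_plus. unfold sumR. apply sum_n_m_ext. intros k.
  exact (sumR_plus a b (f k) (g k)).
Qed.

Lemma sumR2_scal_l a b c (f : nat -> nat -> R) :
  sumR a b (fun k => sumR a b (fun l => c * f k l)) =
  c * sumR a b (fun k => sumR a b (fun l => f k l)).
Proof.
  rewrite <- sumR_scal_l. unfold sumR. apply sum_n_m_ext. intros k.
  exact (sumR_scal_l a b c (f k)).
Qed.

Lemma weighted_amgm (t w x y : R) : 0 < t -> 0 < w ->
  2 * Rabs (x * y) <= t * (/ w * x ^ 2) + / t * (w * y ^ 2).
Proof.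
  intros Ht Hw.
  rewrite Rabs_mult, <- (pow2_abs x), <- (pow2_abs y).
  set (X := Rabs x). set (Y := Rabs y).
  assert (Hsq : t * (/ w * X ^ 2) + / t * (w * Y ^ 2) - 2 * (X * Y) = (t * X - w * Y) ^ 2 / (t * w))
    by (field; lra).
  assert (0 <= (t * X - w * Y) ^ 2 / (t * w)).
  { apply Rdiv_le_0_compat; [apply pow2_ge_0 | nra]. }
  lra.
Qed.

Lemma sumR2_weighted_amgm a b (w x y : nat -> nat -> R) (t : R) : 0 < t ->
  (forall k l, (a <= k <= b)%nat -> (a <= l <= b)%nat -> 0 < w k l) ->
  2 * Rabs (sumR a b (fun k => sumR a b (fun l => x k l * y k l))) <=
  t * sumR a b (fun k => sumR a b (fun l => / w k l * x k l ^ 2)) +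
  / t * sumR a b (fun k => sumR a b (fun l => w k l * y k l ^ 2)).
Proof.
  intros Ht Hw.
  rewrite <- !sumR2_scal_l, <- sumR2_plus.
  apply Rle_trans with (2 * sumR a b (fun k => sumR a b (fun l => Rabs (x k l * y k l)))).
  - apply Rmult_le_compat_l; [lra|].
    eapply Rle_trans; [apply sumR_abs_le|].
    apply sumR_le_loc. intros k _. apply sumR_abs_le.
  - rewrite <- sumR2_scal_l.
    apply sumR_le_loc. intros k Hk. apply sumR_le_loc. intros l Hl.
    apply weighted_amgm; auto.
Qed.

Lemma le_2sqrt_of_forall_amgm (P a b : R) : 0 <= a -> 0 <= b ->
  (forall t, 0 < t -> P <= t * a + / t * b) -> P <= 2 * sqrt (a * b).
Proof.
  intros Ha Hb HP.
  destruct (Req_dec a 0) as [Ha0|Ha0]; [|destruct (Req_dec b 0) as [Hb0|Hb0]].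
  - rewrite Ha0, Rmult_0_l, sqrt_0.
    destruct (Rle_lt_dec P 0) as [|Hpos]; [lra|].
    specialize (HP ((b + 1) / P) ltac:(apply Rdiv_lt_0_compat; lra)).
    replace ((b + 1) / P * a + / ((b + 1) / P) * b) with (P - P / (b + 1)) in HP
      by (rewrite Ha0; field; split; lra).
    assert (0 < P / (b + 1)) by (apply Rdiv_lt_0_compat; lra). lra.
  - rewrite Hb0, Rmult_0_r, sqrt_0.
    destruct (Rle_lt_dec P 0) as [|Hpos]; [lra|].
    specialize (HP (P / (a + 1)) ltac:(apply Rdiv_lt_0_compat; lra)).
    replace (P / (a + 1) * a + / (P / (a + 1)) * b) with (P - P / (a + 1)) in HP
      by (rewrite Hb0; field; split; lra).
    assert (0 < P / (a + 1)) by (apply Rdiv_lt_0_compat; lra). lra.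
  - assert (Hsa : 0 < sqrt a) by (apply sqrt_lt_R0; lra).
    assert (Hsb : 0 < sqrt b) by (apply sqrt_lt_R0; lra).
    specialize (HP (sqrt b / sqrt a) ltac:(apply Rdiv_lt_0_compat; lra)).
    rewrite sqrt_mult by lra.
    set (sa := sqrt a) in *. set (sb := sqrt b) in *.
    assert (Ea : a = sa * sa) by (symmetry; apply sqrt_sqrt; lra).
    assert (Eb : b = sb * sb) by (symmetry; apply sqrt_sqrt; lra).
    rewrite Ea, Eb in HP.
    replace (sb / sa * (sa * sa) + / (sb / sa) * (sb * sb)) with (2 * (sa * sb)) in HP
      by (field; lra).
    exact HP.
Qed.

Lemma INR_sq_add_sq_pos k l : (1 <= k)%nat -> 0 < INR k ^ 2 + INR l ^ 2.
Proof.
  intros Hk. assert (1 <= INR k) by (apply (le_INR 1); exact Hk).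
  assert (0 <= INR l ^ 2) by apply pow2_ge_0. nra.
Qed.

Lemma Khat_component_amgm (M : nat) (u K t : R) (C y : nat -> nat -> R) :
  0 < t -> 0 <= u ->
  u * sqrt (sumR 1 M (fun k => sumR 1 M (fun l => / (INR k ^ 2 + INR l ^ 2) * C k l ^ 2))) <= K ->
  2 * Rabs (sumR 1 M (fun k => sumR 1 M (fun l => u * C k l * y k l))) <=
  t * K ^ 2 + / t * sumR 1 M (fun k => sumR 1 M (fun l => (INR k ^ 2 + INR l ^ 2) * y k l ^ 2)).
Proof.
  intros Ht Hu HK.
  set (S := sumR 1 M (fun k => sumR 1 M (fun l => / (INR k ^ 2 + INR l ^ 2) * C k l ^ 2))) in HK.
  assert (Hw : forall k l, (1 <= k <= M)%nat -> (1 <= l <= M)%nat -> 0 < INR k ^ 2 + INR l ^ 2)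
    by (intros k l Hk _; apply INR_sq_add_sq_pos; lia).
  assert (HS : 0 <= S).
  { apply sumR_nonneg. intros k Hk. apply sumR_nonneg. intros l Hl.
    apply Rmult_le_pos; [left; apply Rinv_0_lt_compat; auto | apply pow2_ge_0]. }
  assert (HuS : u ^ 2 * S <= K ^ 2).
  { rewrite <- (pow2_sqrt S HS), <- Rpow_mult_distr.
    apply pow_incr. split; [apply Rmult_le_pos; [exact Hu | apply sqrt_pos] | exact HK]. }
  assert (Hscal : sumR 1 M (fun k => sumR 1 M (fun l => / (INR k ^ 2 + INR l ^ 2) * (u * C k l) ^ 2))
                  = u ^ 2 * S).
  { unfold S. rewrite <- sumR2_scal_l. unfold sumR. apply sum_n_m_ext. intros k.
    apply sum_n_m_ext. intros l. simpl. ring. }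
  eapply Rle_trans; [exact (sumR2_weighted_amgm 1 M _ (fun k l => u * C k l) y t Ht Hw)|].
  cbv beta. rewrite Hscal. apply Rplus_le_compat_r, Rmult_le_compat_l; lra.
Qed.

Lemma normalized_energy_split (M : nat) (alpha beta : nat -> nat -> R) :
  PI ^ 2 / 4 * sumR 1 M (fun k => sumR 1 M (fun l =>
      (INR k ^ 2 + INR l ^ 2) * (alpha k l ^ 2 + beta k l ^ 2))) = 1 ->
  sumR 1 M (fun k => sumR 1 M (fun l => (INR k ^ 2 + INR l ^ 2) * alpha k l ^ 2)) +
  sumR 1 M (fun k => sumR 1 M (fun l => (INR k ^ 2 + INR l ^ 2) * beta k l ^ 2)) = 4 / PI ^ 2.
Proof.
  intros Hnorm. rewrite <- sumR2_plus.
  assert (HPI : 0 < PI) by exact PI_RGT_0.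
  apply Rmult_eq_reg_l with (PI ^ 2 / 4); [|apply Rgt_not_eq, Rdiv_lt_0_compat; nra].
  replace (PI ^ 2 / 4 * (4 / PI ^ 2)) with 1 by (field; lra).
  rewrite <- Hnorm. f_equal.
  unfold sumR. apply sum_n_m_ext. intros k. apply sum_n_m_ext. intros l. simpl. ring.
Qed.

Lemma sqrt_sqr_mul_le (K c d : R) : 0 <= K -> 0 <= c <= d -> sqrt (K ^ 2 * c) <= sqrt d * K.
Proof.
  intros HK Hcd.
  rewrite sqrt_mult by (apply pow2_ge_0 || lra). rewrite sqrt_pow2 by exact HK.
  rewrite Rmult_comm. apply Rmult_le_compat_r; [exact HK | apply sqrt_le_1_alt; lra].
Qed.

Theorem mainTheorem2 (M N : nat) (alpha beta : nat -> nat -> R) :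
  (1 <= M)%nat -> (1 <= N)%nat ->
  PI ^ 2 / 4 * sumR 1 M (fun k => sumR 1 M (fun l =>
      (INR k ^ 2 + INR l ^ 2) * (alpha k l ^ 2 + beta k l ^ 2))) = 1 ->
  forall m n i j : nat,
    (1 <= m <= N)%nat -> (1 <= n <= N)%nat -> (1 <= i <= N)%nat -> (1 <= j <= N)%nat ->
    - (2 * sqrt 2 * Khat M i j m n) <= F_coef M alpha i j m n + G_coef M beta i j m n /\
    F_coef M alpha i j m n + G_coef M beta i j m n <= 2 * sqrt 2 * Khat M i j m n.
Proof.
  intros _ _ Hnorm m n i j _ _ _ _.
  set (K := Khat M i j m n).
  assert (HSab := normalized_energy_split M alpha beta Hnorm).
  set (Sa := sumR 1 M _) in HSab. set (Sb := sumR 1 M _) in HSab.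
  assert (HPI : 3 < PI) by (pose proof PI2_3_2; lra).
  assert (Hc : 0 <= 2 / PI ^ 2 <= 2).
  { split; [apply Rdiv_le_0_compat; nra|].
    apply Rmult_le_reg_r with (PI ^ 2); [nra|]. unfold Rdiv. field_simplify; nra. }
  assert (HK0 : 0 <= K).
  { eapply Rle_trans; [|apply Rmax_l]. apply Rmult_le_pos; [apply pos_INR | apply sqrt_pos]. }
  assert (Hmin : Rabs (F_coef M alpha i j m n + G_coef M beta i j m n)
                 <= 2 * sqrt (K ^ 2 * (2 / PI ^ 2))).
  { apply le_2sqrt_of_forall_amgm; [apply pow2_ge_0 | apply Hc |].
    intros t Ht.
    pose proof (Khat_component_amgm M (INR i) K t (fun k l => A_coef k l i j m n) alpha
                  Ht (pos_INR i) (Rmax_l _ _)) as HF.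
    pose proof (Khat_component_amgm M (INR j) K t (fun k l => B_coef k l i j m n) beta
                  Ht (pos_INR j) (Rmax_r _ _)) as HG.
    fold Sa in HF. fold Sb in HG.
    assert (Hsplit : / t * Sa + / t * Sb = 2 * (/ t * (2 / PI ^ 2))).
    { rewrite <- Rmult_plus_distr_l, HSab. field. lra. }
    pose proof (Rabs_triang (F_coef M alpha i j m n) (G_coef M beta i j m n)).
    unfold F_coef, G_coef in *. lra. }
  pose proof (sqrt_sqr_mul_le K _ 2 HK0 Hc).
  apply Rabs_le_between. lra.
Qed.
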